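(* Let $U\subset\mathbb H$ be an axially symmetric open set with $U\cap\mathbb R=\emptyset$, and let $\tilde f$ be an axially harmonic function on $U$. Suppose that $\tilde f(q)=A(q_0,r)+\underline{\omega}\,B(q_0,r)$ for $q=q_0+r\underline{\omega}\in U$, $r>0$, $\underline{\omega}\in\mathbb S$, where $A,B$ are $\mathbb H$-valued functions of class $C^2$. Then $A$ and $B$ satisfy the system $$\partial_{q_0}^2A+\partial_r^2A+\frac{2}{r}\partial_rA=0,\qquad \partial_{q_0}^2B+\partial_r^2B+\frac{2r\,\partial_rB-2B}{r^2}=0 .$$
   Context: $\mathbb H$ denotes the quaternions $q=q_0+q_1e_1+q_2e_2+q_3e_3$ with $e_1^2=e_2^2=e_3^2=-1$, $e_1e_2=-e_2e_1=e_3$, $e_2e_3=-e_3e_2=e_1$, $e_3e_1=-e_1e_3=e_2$; $\underline q=q_1e_1+q_2e_2+q_3e_3$, $\mathbb S=\{\underline q: q_1^2+q_2^2+q_3^2=1\}$. A set $U\subset\mathbb H$ is axially symmetric if $u+Iv\in U$ implies $u+Jv\in U$ for all $J\in\mathbb S$. The Fueter operator is $\mathcal D=\partial_{q_0}+\sum_{i=1}^3e_i\partial_{q_i}$ and $\Delta=\sum_{i=0}^3\partial_{q_i}^2$. A function $\tilde f$ on an axially symmetric open set $U$ (not meeting $\mathbb R$) is called axially harmonic if $\tilde f=\mathcal D f$ where $f:U\to\mathbb H$ is of class $C^3$ of the form $f(u+Jv)=\alpha(u,v)+J\beta(u,v)$ ($J\in\mathbb S$, $v>0$) with $\alpha,\beta$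 $\mathbb H$-valued, and $\Delta\tilde f=0$ on $U$. *)

(* Quaternions H are modelled as row vectors 'rV[R]_4
   (components q_0, q_1, q_2, q_3), with the quaternion product written out. *)
From HB Require Import structures.
From mathcomp Require Import all_boot all_order all_algebra.
From mathcomp Require Import all_classical all_reals all_analysis.
Set Implicit Arguments. Unset Strict Implicit. Unset Printing Implicit Defensive.
Import Order.TTheory GRing.Theory Num.Theory.
Import numFieldNormedType.Exports.
Local Open Scope classical_set_scope.
Local Open Scope ring_scope.

Section Quat.
Variable R : realType.

Definition mkq (a b c d : R) : 'rV[R]_4 := \row_(k < 4) [:: a; b; c; d]`_k.

Definition qc (q : 'rV[R]_4) (k : nat) : R := q ord0 (inord k).

Definition qe (i : 'I_4) : 'rV[R]_4 := delta_mx ord0 i.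

(* quaternion product, with e1e2 = e3, e2e3 = e1, e3e1 = e2, ei^2 = -1 *)
Definition qmul (p q : 'rV[R]_4) : 'rV[R]_4 :=
  mkq (qc p 0 * qc q 0 - qc p 1 * qc q 1 - qc p 2 * qc q 2 - qc p 3 * qc q 3)
      (qc p 0 * qc q 1 + qc p 1 * qc q 0 + qc p 2 * qc q 3 - qc p 3 * qc q 2)
      (qc p 0 * qc q 2 + qc p 2 * qc q 0 + qc p 3 * qc q 1 - qc p 1 * qc q 3)
      (qc p 0 * qc q 3 + qc p 3 * qc q 0 + qc p 1 * qc q 2 - qc p 2 * qc q 1).

Definition qreal (u : R) : 'rV[R]_4 := u *: qe 0.

Definition qax (u v : R) (J : 'rV[R]_4) : 'rV[R]_4 := qreal u + v *: J.

Definition qsphere : set 'rV[R]_4 :=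
  [set J | qc J 0 = 0 /\ qc J 1 ^+ 2 + qc J 2 ^+ 2 + qc J 3 ^+ 2 = 1].

Definition axially_symmetric (U : set 'rV[R]_4) : Prop :=
  forall (u v : R) (I J : 'rV[R]_4), qsphere I -> qsphere J ->
    U (qax u v I) -> U (qax u v J).

Definition partial (n : nat) (i : 'I_n) (f : 'rV[R]_n -> 'rV[R]_4)
  (x : 'rV[R]_n) : 'rV[R]_4 := 'D_(delta_mx ord0 i) f x.

Fixpoint Ck (n : nat) (k : nat) (U : set 'rV[R]_n)
  (f : 'rV[R]_n -> 'rV[R]_4) : Prop :=
  (forall x, U x -> {for x, continuous f}) /\
  match k with
  | 0 => True
  | k'.+1 => forall i : 'I_n,
      (forall x, U x -> derivable f x (delta_mx ord0 i)) /\
      Ck k' U (partial i f)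
  end.

Definition fueter (f : 'rV[R]_4 -> 'rV[R]_4) (q : 'rV[R]_4) : 'rV[R]_4 :=
  partial 0 f q + qmul (qe 1) (partial 1 f q) + qmul (qe 2) (partial 2 f q)
  + qmul (qe 3) (partial 3 f q).

Definition laplacian (g : 'rV[R]_4 -> 'rV[R]_4) (q : 'rV[R]_4) : 'rV[R]_4 :=
  \sum_(i < 4) partial i (partial i g) q.

Definition axially_harmonic (U : set 'rV[R]_4) (ft : 'rV[R]_4 -> 'rV[R]_4)
  : Prop :=
  exists f : 'rV[R]_4 -> 'rV[R]_4,
    Ck 3 U f /\
    (exists alpha beta : R -> R -> 'rV[R]_4,
       forall (u v : R) (J : 'rV[R]_4), qsphere J -> 0 < v -> U (qax u v J) ->
         f (qax u v J) = alpha u v + qmul J (beta u v)) /\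
    (forall q, U q -> ft q = fueter f q) /\
    (forall q, U q -> laplacian ft q = 0).

Definition pt2 (a b : R) : 'rV[R]_2 := \row_(k < 2) [:: a; b]`_k.

(* the set of (q0, r) with r > 0 and q0 + r w in U (for some, equivalently
   every by axial symmetry, w in S) *)
Definition axial_domain (U : set 'rV[R]_4) : set 'rV[R]_2 :=
  [set p | 0 < p ord0 (inord 1) /\
           exists w, qsphere w /\ U (qax (p ord0 (inord 0)) (p ord0 (inord 1)) w)].

End Quat.

(* Fix q0, r > 0 and J = e1 or J = -e1; by axial symmetry c = q0 + r J lies in U.
   Along each coordinate axis, the representation ft(u + v w) = A(u, v) + w B(u, v)
   turns s |-> ft(c + s e) into an explicit function of one variable:
   - along e0 and along e1 = +-J only the arguments of A and B move, affinely;
   - along e2 and e3, which are orthogonal to J, c + s e = q0 + rho(s) J(s) with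
     rho(s) = sqrt(r^2 + s^2) and J(s) = (r J + s e) / rho(s) in S.
   Differentiating twice at s = 0 and summing gives Laplacian ft (c) = L_A + J L_B,
   where L_A, L_B are the left-hand sides of the system at (q0, r).  As ft is
   harmonic, J = e1 and J = -e1 give L_A + e1 L_B = 0 = L_A - e1 L_B, whence
   L_A = L_B = 0. *)

From HB Require Import structures.
From mathcomp Require Import all_boot all_order all_algebra.
From mathcomp Require Import all_classical all_reals all_analysis.
From mathcomp Require Import ring.
Import Order.TTheory GRing.Theory Num.Theory.
Import numFieldNormedType.Exports.
Local Open Scope classical_set_scope.
Local Open Scope ring_scope.
Set Implicit Arguments. Unset Strict Implicit. Unset Printing Implicit Defensive.

Section LineDerivatives.
Context {R : realType} {V W : normedModType R}.
Implicit Types (F : V -> W) (a v : V).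

Lemma growth_rate_line F a v t :
  (fun h : R => h^-1 *: (((fun s => F (a + s *: v)) \o shift t) (h *: 1) - F (a + t *: v))) =
  (fun h : R => h^-1 *: ((F \o shift (a + t *: v)) (h *: v) - F (a + t *: v))).
Proof. by apply/funext => h /=; rewrite [h *: 1]mulr1 scalerDl addrCA. Qed.

Lemma derive_line F a v t :
  'D_1 (fun s : R => F (a + s *: v)) t = 'D_v F (a + t *: v).
Proof. by rewrite /derive growth_rate_line. Qed.

Lemma derivable_line F a v t :
  derivable (fun s : R => F (a + s *: v)) t 1 <-> derivable F (a + t *: v) v.
Proof. by rewrite /derivable growth_rate_line. Qed.

Lemma derive2_line F a v :
  'D_v ('D_v F) a = 'D_1 (fun s : R => 'D_1 (fun z : R => F (a + z *: v)) s) 0.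
Proof.
transitivity ('D_1 (fun s : R => 'D_v F (a + s *: v)) 0).
  by rewrite -[in LHS](addr0 a) -(scale0r v) -derive_line.
by f_equal; apply/funext => s; rewrite derive_line.
Qed.

Lemma open_line (U : set V) a v x :
  open U -> U (a + x *: v) -> \forall t \near x, U (a + t *: v).
Proof.
have line_cont : {for x, continuous (fun t : R => a + t *: v)}.
  by apply: cvgD; [exact: cvg_cst | apply: cvgZl; exact: cvg_id].
by rewrite openE => /[apply] /line_cont.
Qed.

End LineDerivatives.

Section MatrixValuedDerivatives.
Context {R : realType}.

Lemma is_derive_mxP {V : normedModType R} {m n} (F : V -> 'M[R]_(m, n)) x v dF :
  is_derive x v F dF <-> forall i j, is_derive x v (fun y => F y i j) (dF i j).
Proof.
split=> [[dF_ex <-] i j | dFij].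
  have dFij := (derivable_mxP F x v).1 dF_ex i j.
  by apply: DeriveDef => //; rewrite derive_mx // mxE.
have dF_ex : derivable F x v by apply/derivable_mxP => i j; case: (dFij i j).
apply: DeriveDef => //; rewrite derive_mx //; apply/matrixP => i j.
by rewrite mxE; case: (dFij i j).
Qed.

Lemma is_derive_scale {m n} (h : R -> R) (F : R -> 'M[R]_(m, n)) (t dh : R) dF :
  is_derive t 1 h dh -> is_derive t 1 F dF ->
  is_derive t 1 (fun s => h s *: F s) (h t *: dF + dh *: F t).
Proof.
move=> dh_def /is_derive_mxP dF_def; apply/is_derive_mxP => i j.
have -> : (fun s => (h s *: F s) i j) = h * (fun s => F s i j).
  by apply/funext => s; rewrite mxE.
apply: is_derive_eq (is_deriveM dh_def (dF_def i j)) _.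
by rewrite !mxE /GRing.scale /= [dh * _]mulrC.
Qed.

Lemma is_derive_comp {m n} (rho : R -> R) (F : R -> 'M[R]_(m, n)) (t drho : R) dF :
  is_derive t 1 rho drho -> is_derive (rho t) 1 F dF ->
  is_derive t 1 (F \o rho) (drho *: dF).
Proof.
move=> drho_def /is_derive_mxP dF_def; apply/is_derive_mxP => i j.
rewrite mxE mulrC; exact: is_derive1_comp.
Qed.

Lemma is_derive_linear {p m n} (f : 'rV[R]_p -> 'M[R]_(m, n)) (F : R -> 'rV[R]_p)
    (t : R) (dF : 'rV[R]_p) :
  linear f -> is_derive t 1 F dF -> is_derive t 1 (f \o F) (f dF).
Proof.
move=> f_lin /is_derive_mxP dF_def.
pose fL : {linear 'rV[R]_p -> 'M[R]_(m, n)} :=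
  HB.pack f (GRing.isLinear.Build _ _ _ _ f f_lin).
have fLE X : fL X = \sum_(k < p) X 0 k *: fL (delta_mx 0 k).
  by rewrite {1}(row_sum_delta X) linear_sum; apply: eq_bigr => k _; rewrite linearZ.
have -> : f \o F = \sum_(k < p) (fun s => F s 0 k *: f (delta_mx 0 k)).
  by rewrite fct_sumE; apply/funext => s; exact: fLE.
rewrite [f dF]fLE; apply: is_derive_sum => k.
apply: is_derive_eq; first exact: is_derive_scale (dF_def 0 k) (is_derive_cst _ _ _).
by rewrite scaler0 add0r.
Qed.

End MatrixValuedDerivatives.

Section SecondDerivative.
Context {R : realType}.

Definition is_derive2 {V : normedModType R} (x : R) (f f' : R -> V) (f'' : V) :=
  (\forall s \near x, is_derive (s : R) 1 f (f' s)) /\ is_derive x 1 f' f''.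

Lemma is_derive1_continuous {V : normedModType R} (f : R -> V) (x : R) df :
  is_derive x 1 f df -> {for x, continuous f}.
Proof. by case=> /derivable1_diffP /differentiable_continuous. Qed.

Lemma is_derive2_affine (a k x : R) : is_derive2 x (fun s => a + k * s) (cst k) 0.
Proof.
split; last exact: is_derive_cst.
apply: filterE => s.
apply: is_derive_eq (is_deriveD (is_derive_cst a s 1) (is_deriveZ k (is_derive_id s 1))) _.
by rewrite add0r [_ *: 1]mulr1.
Qed.

Lemma is_derive2D {V : normedModType R} (f f' g g' : R -> V) x f'' g'' :
  is_derive2 x f f' f'' -> is_derive2 x g g' g'' ->
  is_derive2 x (f + g) (f' + g') (f'' + g'').
Proof.
move=> [df df'] [dg dg']; split; last exact: is_deriveD.
by move: df dg; apply: filterS2 => s; exact: is_deriveD.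
Qed.

Lemma derive2_near_eq {V : normedModType R} (F G G' : R -> V) x G'' :
  is_derive2 x G G' G'' -> (\forall s \near x, F s = G s) -> 'D_1 ('D_1 F) x = G''.
Proof.
move=> [dG [_ <-]] FG; apply: near_eq_derive.
by move: (near_join FG) dG; apply: filterS2 => s FGs [_ <-]; exact: near_eq_derive.
Qed.

Lemma derive2_along {V W : normedModType R} (F : V -> W) a v (G G' : R -> W) G'' :
  is_derive2 0 G G' G'' -> (\forall s \near 0, F (a + s *: v) = G s) ->
  'D_v ('D_v F) a = G''.
Proof. by rewrite derive2_line; exact: derive2_near_eq. Qed.

Lemma is_derive2_scale {m n} (h h' : R -> R) h'' (F F' : R -> 'M[R]_(m, n)) F'' x :
  is_derive2 x h h' h'' -> is_derive2 x F F' F'' ->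
  is_derive2 x (fun s => h s *: F s) (fun s => h s *: F' s + h' s *: F s)
    (h x *: F'' + (h' x *: F' x) *+ 2 + h'' *: F x).
Proof.
move=> [dh dh'] [dF dF']; split.
  by move: dh dF; apply: filterS2 => s; exact: is_derive_scale.
have -> : (fun s => h s *: F' s + h' s *: F s) =
          (fun s => h s *: F' s) + (fun s => h' s *: F s) by [].
apply: is_derive_eq (is_deriveD (is_derive_scale (nbhs_singleton dh) dF')
                                (is_derive_scale dh' (nbhs_singleton dF))) _.
by rewrite mulr2n !addrA.
Qed.

Lemma is_derive2_comp {m n} (rho rho' : R -> R) rho'' (F F' : R -> 'M[R]_(m, n)) F'' x y :
  is_derive2 x rho rho' rho'' -> rho x = y -> is_derive2 y F F' F'' ->
  is_derive2 x (F \o rho) (fun s => rho' s *: F' (rho s))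
    (rho' x ^+ 2 *: F'' + rho'' *: F' y).
Proof.
move=> [drho drho'] <- [dF dF']; split.
  by move: drho (is_derive1_continuous (nbhs_singleton drho) dF); apply: filterS2 => s;
    exact: is_derive_comp.
apply: is_derive_eq
  (is_derive_scale drho' (is_derive_comp (nbhs_singleton drho) dF')) _.
by rewrite scalerA -expr2.
Qed.

Lemma is_derive2_linear {p m n} (f : 'rV[R]_p -> 'M[R]_(m, n))
    (F F' : R -> 'rV[R]_p) F'' x :
  linear f -> is_derive2 x F F' F'' -> is_derive2 x (f \o F) (f \o F') (f F'').
Proof.
move=> f_lin [dF dF']; split; last exact: is_derive_linear.
by move: dF; apply: filterS => s; exact: is_derive_linear.
Qed.

End SecondDerivative.

Section Hypot.
Context {R : realType}.
Variable r : R.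
Hypothesis r_gt0 : 0 < r.

Definition hypot (s : R) := Num.sqrt (r ^+ 2 + s ^+ 2).

Lemma hypot_sqr_gt0 s : 0 < r ^+ 2 + s ^+ 2.
Proof. by rewrite ltr_wpDr ?sqr_ge0 ?exprn_gt0. Qed.

Lemma hypot_gt0 s : 0 < hypot s.
Proof. by rewrite sqrtr_gt0 hypot_sqr_gt0. Qed.

Lemma hypot_neq0 s : hypot s != 0.
Proof. by rewrite gt_eqF ?hypot_gt0. Qed.

Lemma hypot_sqr s : hypot s ^+ 2 = r ^+ 2 + s ^+ 2.
Proof. by rewrite sqr_sqrtr ?ltW ?hypot_sqr_gt0. Qed.

Lemma hypot0 : hypot 0 = r.
Proof. by rewrite /hypot expr0n addr0 sqrtr_sqr gtr0_norm. Qed.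

Lemma is_derive_hypot (s : R) : is_derive s 1 hypot (s / hypot s).
Proof.
have d_sqr : is_derive s 1 (fun t : R => r ^+ 2 + t ^+ 2) (2 * s).
  apply: is_derive_eq (is_deriveD (is_derive_cst (r ^+ 2) s 1)
                                  (is_deriveX 2 (is_derive_id s 1))) _.
  by rewrite add0r expr1 [_ *: 1]mulr1.
apply: is_derive_eq
  (is_derive1_comp (g := fun t => r ^+ 2 + t ^+ 2) (is_derive1_sqrt (hypot_sqr_gt0 s)) d_sqr) _.
by rewrite -/(hypot s); field; rewrite hypot_neq0.
Qed.

Lemma is_derive_hypotV (s : R) :
  is_derive s 1 (fun t => (hypot t)^-1) (- s / hypot s ^+ 3).
Proof.
apply: is_derive_eq (is_deriveV (hypot_neq0 s) (is_derive_hypot s)) _.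
by rewrite /GRing.scale /=; field; rewrite hypot_neq0.
Qed.

Lemma is_derive2_hypot : is_derive2 0 hypot (fun s => s / hypot s) r^-1.
Proof.
split; first exact: filterE is_derive_hypot.
have -> : (fun s => s / hypot s) = id * (fun s => (hypot s)^-1) by [].
apply: is_derive_eq (is_deriveM (is_derive_id (0 : R) 1) (is_derive_hypotV 0)) _.
by rewrite hypot0 /GRing.scale /=; field; rewrite gt_eqF.
Qed.

Lemma is_derive_hypotX3V (s : R) :
  is_derive s 1 (fun t => (hypot t ^+ 3)^-1) (- 3 * s / hypot s ^+ 5).
Proof.
have -> : (fun t => (hypot t ^+ 3)^-1) = (fun t => ((hypot ^+ 3) t)^-1).
  by rewrite exprfctE.
have hypotX3_neq0 : (hypot ^+ 3) s != 0 by rewrite exprfctE expf_neq0 ?hypot_neq0.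
apply: is_derive_eq (is_deriveV hypotX3_neq0 (is_deriveX 3 (is_derive_hypot s))) _.
by rewrite exprfctE /GRing.scale /=; field; rewrite hypot_neq0.
Qed.

Lemma is_derive2_hypot_cos :
  is_derive2 0 (fun s => r / hypot s) (fun s => - r * s / hypot s ^+ 3) (- (r ^+ 2)^-1).
Proof.
have -> : (fun s => r / hypot s) = cst r * (fun s => (hypot s)^-1) by [].
split.
  apply: filterE => s.
  apply: is_derive_eq (is_deriveM (is_derive_cst r s 1) (is_derive_hypotV s)) _.
  by rewrite /GRing.scale /cst /=; field; rewrite hypot_neq0.
have -> : (fun s => - r * s / hypot s ^+ 3) =
          (- r) \*: id * (fun s => (hypot s ^+ 3)^-1) by [].
apply: is_derive_eq (is_deriveM (is_deriveZ (- r) (is_derive_id (0 : R) 1))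
                                (is_derive_hypotX3V 0)) _.
by rewrite hypot0 /GRing.scale /=; field; rewrite gt_eqF.
Qed.

Lemma is_derive2_hypot_sin :
  is_derive2 0 (fun s => s / hypot s) (fun s => r ^+ 2 / hypot s ^+ 3) 0.
Proof.
have -> : (fun s => s / hypot s) = id * (fun s => (hypot s)^-1) by [].
split.
  apply: filterE => s.
  apply: is_derive_eq (is_deriveM (is_derive_id s 1) (is_derive_hypotV s)) _.
  have -> : r ^+ 2 = hypot s ^+ 2 - s ^+ 2 by rewrite hypot_sqr addrK.
  by rewrite /GRing.scale /=; field; rewrite hypot_neq0.
have -> : (fun s => r ^+ 2 / hypot s ^+ 3) =
          cst (r ^+ 2) * (fun s => (hypot s ^+ 3)^-1) by [].
apply: is_derive_eq (is_deriveM (is_derive_cst (r ^+ 2) (0 : R) 1)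
                                (is_derive_hypotX3V 0)) _.
by rewrite /GRing.scale /=; field; rewrite hypot_neq0.
Qed.

End Hypot.

Section QuaternionAlgebra.
Context {R : realType}.
Implicit Types (p q X Y J e : 'rV[R]_4) (a b c d : R) (k : nat).

Lemma qc_mkq0 a b c d : qc (mkq a b c d) 0 = a.
Proof. by rewrite /qc mxE inordK. Qed.
Lemma qc_mkq1 a b c d : qc (mkq a b c d) 1 = b.
Proof. by rewrite /qc mxE inordK. Qed.
Lemma qc_mkq2 a b c d : qc (mkq a b c d) 2 = c.
Proof. by rewrite /qc mxE inordK. Qed.
Lemma qc_mkq3 a b c d : qc (mkq a b c d) 3 = d.
Proof. by rewrite /qc mxE inordK. Qed.

Lemma qcD p q k : qc (p + q) k = qc p k + qc q k.
Proof. by rewrite /qc mxE. Qed.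
Lemma qcN p k : qc (- p) k = - qc p k.
Proof. by rewrite /qc mxE. Qed.
Lemma qcZ a p k : qc (a *: p) k = a * qc p k.
Proof. by rewrite /qc mxE. Qed.
Lemma qc0 k : qc (0 : 'rV[R]_4) k = 0.
Proof. by rewrite /qc mxE. Qed.

Lemma qcMn p n k : qc (p *+ n) k = qc p k *+ n.
Proof. by rewrite /qc mulmxnE. Qed.

Definition qcE := (qc_mkq0, qc_mkq1, qc_mkq2, qc_mkq3, qcD, qcN, qcZ, qcMn, qc0).

Lemma qe_mkq1 : qe R 1 = mkq 0 1 0 0.
Proof. by apply/rowP => -[[|[|[|[|k]]]] ?]; rewrite !mxE. Qed.
Lemma qe_mkq2 : qe R 2 = mkq 0 0 1 0.
Proof. by apply/rowP => -[[|[|[|[|k]]]] ?]; rewrite !mxE. Qed.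
Lemma qe_mkq3 : qe R 3 = mkq 0 0 0 1.
Proof. by apply/rowP => -[[|[|[|[|k]]]] ?]; rewrite !mxE. Qed.

Lemma quat_ext p q :
  qc p 0 = qc q 0 -> qc p 1 = qc q 1 -> qc p 2 = qc q 2 -> qc p 3 = qc q 3 -> p = q.
Proof.
by move=> *; apply/rowP => k; rewrite -(inord_val k); case: k => -[|[|[|[|k]]]].
Qed.

Lemma qmul_is_linear J : linear (qmul J).
Proof. by move=> a p q; apply: quat_ext; rewrite /qmul !qcE; ring. Qed.

HB.instance Definition _ J :=
  GRing.isLinear.Build R 'rV[R]_4 'rV[R]_4 _ (qmul J) (qmul_is_linear J).

Lemma qmulDl p q X : qmul (p + q) X = qmul p X + qmul q X.
Proof. by apply: quat_ext; rewrite /qmul !qcE; ring. Qed.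

Lemma qmulZl a p X : qmul (a *: p) X = a *: qmul p X.
Proof. by apply: quat_ext; rewrite /qmul !qcE; ring. Qed.

Lemma qmulNl p X : qmul (- p) X = - qmul p X.
Proof. by apply: quat_ext; rewrite /qmul !qcE; ring. Qed.

Lemma qmul_sphereK J X : qsphere J -> qmul J (qmul J X) = - X.
Proof.
move=> [J0 J_unit].
have sqrJ k : - qc X k = - (qc J 1 ^+ 2 + qc J 2 ^+ 2 + qc J 3 ^+ 2) * qc X k.
  by rewrite J_unit mulN1r.
by apply: quat_ext; rewrite /qmul !qcE [RHS]sqrJ J0; ring.
Qed.

Lemma qmul_sphere_eq0 J X Y : qsphere J ->
  X + qmul J Y = 0 -> X - qmul J Y = 0 -> X = 0 /\ Y = 0.
Proof.
move=> J_sphere XY_add XY_sub.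
have X0 : X = 0.
  have : (X + qmul J Y) + (X - qmul J Y) = 0 by rewrite XY_add XY_sub addr0.
  rewrite addrACA subrr addr0 -mulr2n -scaler_nat => /eqP.
  by rewrite scaler_eq0 pnatr_eq0 /= => /eqP.
split => //; move: XY_add; rewrite X0 add0r => JY0.
by rewrite -[Y]opprK -(qmul_sphereK Y J_sphere) JY0 linear0 oppr0.
Qed.

Lemma qsphere_comb J e a b :
  qsphere J -> qsphere e ->
  qc J 1 * qc e 1 + qc J 2 * qc e 2 + qc J 3 * qc e 3 = 0 ->
  a ^+ 2 + b ^+ 2 = 1 -> qsphere (a *: J + b *: e).
Proof.
move=> [J0 J_unit] [e0 e_unit] Je_orth ab_unit; split; rewrite !qcE.
  by rewrite J0 e0 !mulr0 addr0.
transitivity (a ^+ 2 * (qc J 1 ^+ 2 + qc J 2 ^+ 2 + qc J 3 ^+ 2)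
  + b ^+ 2 * (qc e 1 ^+ 2 + qc e 2 ^+ 2 + qc e 3 ^+ 2)
  + 2 * a * b * (qc J 1 * qc e 1 + qc J 2 * qc e 2 + qc J 3 * qc e 3)); first ring.
by rewrite J_unit e_unit Je_orth !mulr1 mulr0 addr0.
Qed.

End QuaternionAlgebra.

Section SecondPartials.
Context {R : realType}.

Lemma Ck2_is_derive2_partial {n} (D : set 'rV[R]_n) (F : 'rV[R]_n -> 'rV[R]_4) i
    (ell : R -> 'rV[R]_n) x :
  Ck 2 D F -> (forall t, ell t = ell 0 + t *: delta_mx 0 i) ->
  (\forall t \near x, D (ell t)) ->
  is_derive2 x (fun t => F (ell t)) (fun t => partial i F (ell t))
    (partial i (partial i F) (ell x)).
Proof.
move=> [_ /(_ i) [dF [_ /(_ i) [dF' _]]]] /funext -> /= D_ell; split.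
  move: D_ell; apply: filterS => t D_t.
  by apply: DeriveDef; [apply/derivable_line; exact: dF | exact: derive_line].
apply: DeriveDef; last exact: derive_line.
apply/derivable_line; exact/dF'/(nbhs_singleton D_ell).
Qed.

End SecondPartials.

Section PlanePoints.
Context {R : realType}.

Lemma pt2_0 (a b : R) : pt2 a b 0 (inord 0) = a.
Proof. by rewrite /pt2 mxE inordK. Qed.

Lemma pt2_1 (a b : R) : pt2 a b 0 (inord 1) = b.
Proof. by rewrite /pt2 mxE inordK. Qed.

Lemma pt2_e0 (t b : R) : pt2 t b = pt2 0 b + t *: delta_mx 0 0.
Proof. by apply/rowP => -[[|[|k]] ?]; rewrite !mxE /= ?mulr1 ?mulr0 ?add0r ?addr0. Qed.

Lemma pt2_e1 (a t : R) : pt2 a t = pt2 a 0 + t *: delta_mx 0 1.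
Proof. by apply/rowP => -[[|[|k]] ?]; rewrite !mxE /= ?mulr1 ?mulr0 ?add0r ?addr0. Qed.

Lemma pt2_eta (p : 'rV[R]_2) : p = pt2 (p 0 (inord 0)) (p 0 (inord 1)).
Proof.
by apply/rowP => -[[|[|k]] lt_k]; rewrite mxE //=; congr (p 0 _); apply: val_inj;
  rewrite /= ?inordK.
Qed.

End PlanePoints.

Lemma big_ord4 (V : nmodType) (F : 'I_4 -> V) :
  \sum_(i < 4) F i = F 0 + F 1 + F 2 + F 3.
Proof.
rewrite !big_ord_recr big_ord0 /=.
by congr (_ + _ + _ + _); rewrite ?add0r; congr F; apply: val_inj.
Qed.

Section AxialSecondDerivatives.
Context {R : realType}.
Variables (U : set 'rV[R]_4) (ft : 'rV[R]_4 -> 'rV[R]_4) (A B : 'rV[R]_2 -> 'rV[R]_4).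
Hypothesis U_open : open U.
Hypothesis ft_axial : forall (q0 r : R) (w : 'rV[R]_4), qsphere w -> 0 < r ->
  U (qax q0 r w) -> ft (qax q0 r w) = A (pt2 q0 r) + qmul w (B (pt2 q0 r)).
Hypotheses (A_C2 : Ck 2 (axial_domain U) A) (B_C2 : Ck 2 (axial_domain U) B).
Variables (J : 'rV[R]_4) (q0 r : R).
Hypotheses (J_sphere : qsphere J) (r_gt0 : 0 < r) (U_c : U (qax q0 r J)).

Lemma axial_domain_pt2 (a t : R) : 0 < t -> U (qax a t J) -> axial_domain U (pt2 a t).
Proof. by move=> t_gt0 U_at; split; rewrite pt2_1 //; exists J; rewrite pt2_0. Qed.

Lemma is_derive2_q0 (F : 'rV[R]_2 -> 'rV[R]_4) : Ck 2 (axial_domain U) F ->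
  is_derive2 q0 (fun t => F (pt2 t r)) (fun t => partial 0 F (pt2 t r))
    (partial 0 (partial 0 F) (pt2 q0 r)).
Proof.
move=> F_C2; apply: Ck2_is_derive2_partial F_C2 (fun t => pt2_e0 t r) _.
have U_line : U (r *: J + q0 *: qe R 0) by rewrite addrC.
move: (open_line U_open U_line); apply: filterS => t U_t.
by apply: axial_domain_pt2 => //; rewrite /qax /qreal addrC.
Qed.

Lemma is_derive2_r (F : 'rV[R]_2 -> 'rV[R]_4) : Ck 2 (axial_domain U) F ->
  is_derive2 r (fun t => F (pt2 q0 t)) (fun t => partial 1 F (pt2 q0 t))
    (partial 1 (partial 1 F) (pt2 q0 r)).
Proof.
move=> F_C2; apply: Ck2_is_derive2_partial F_C2 (fun t => pt2_e1 q0 t) _.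
move: (open_line U_open U_c) (lt_nbhsr r_gt0); apply: filterS2 => t U_t t_gt0.
exact: axial_domain_pt2.
Qed.

Local Notation c := (qax q0 r J).
Local Notation p := (pt2 q0 r).

Lemma derive2_real_dir :
  'D_(qe R 0) ('D_(qe R 0) ft) c =
  partial 0 (partial 0 A) p + qmul J (partial 0 (partial 0 B) p).
Proof.
have shift0 : q0 + 1 * 0 = q0 by rewrite mulr0 addr0.
have dA := is_derive2_comp (is_derive2_affine q0 1 0) shift0 (is_derive2_q0 A_C2).
have dB := is_derive2_linear (qmul_is_linear J)
  (is_derive2_comp (is_derive2_affine q0 1 0) shift0 (is_derive2_q0 B_C2)).
rewrite (derive2_along (is_derive2D dA dB)).
  (* The partial derivatives are abstracted first: rewriting in their presence
     is prohibitively slow. *)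
  move: (partial 0 (partial 0 A) _) (partial 0 A _) (partial 0 (partial 0 B) _) (partial 0 B _).
  by move=> *; rewrite expr1n !scale1r !scale0r !addr0.
have U_c0 : U (c + 0 *: qe R 0) by rewrite scale0r addr0.
move: (open_line U_open U_c0); apply: filterS => s U_s.
have c_s : c + s *: qe R 0 = qax (q0 + 1 * s) r J.
  by rewrite /qax /qreal mul1r scalerDl addrAC.
by rewrite c_s in U_s *; rewrite ft_axial.
Qed.

Lemma derive2_radial_dir (k : R) (v : 'rV[R]_4) : v = k *: J ->
  'D_v ('D_v ft) c =
  k ^+ 2 *: (partial 1 (partial 1 A) p + qmul J (partial 1 (partial 1 B) p)).
Proof.
move=> ->; have shift0 : r + k * 0 = r by rewrite mulr0 addr0.
have dA := is_derive2_comp (is_derive2_affine r k 0) shift0 (is_derive2_r A_C2).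
have dB := is_derive2_linear (qmul_is_linear J)
  (is_derive2_comp (is_derive2_affine r k 0) shift0 (is_derive2_r B_C2)).
rewrite (derive2_along (is_derive2D dA dB)).
  move: (partial 1 (partial 1 A) _) (partial 1 A _) (partial 1 (partial 1 B) _) (partial 1 B _).
  by move=> *; rewrite !scale0r !addr0 linearZ scalerDr.
have U_c0 : U (c + 0 *: (k *: J)) by rewrite scale0r addr0.
have r_pos : 0 < r + k * 0 by rewrite shift0.
have := is_derive1_continuous (nbhs_singleton (is_derive2_affine r k 0).1) (lt_nbhsr r_pos).
move: (open_line U_open U_c0); apply: filterS2 => s U_s rs_gt0.
have c_s : c + s *: (k *: J) = qax q0 (r + k * s) J.
  by rewrite /qax scalerA scalerDl addrA [s * k]mulrC.
by rewrite c_s in U_s *; rewrite ft_axial.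
Qed.

Lemma derive2_orth_dir (e : 'rV[R]_4) : qsphere e ->
  qc J 1 * qc e 1 + qc J 2 * qc e 2 + qc J 3 * qc e 3 = 0 ->
  'D_e ('D_e ft) c =
  r^-1 *: partial 1 A p + qmul J (r^-1 *: partial 1 B p - (r ^+ 2)^-1 *: B p).
Proof.
move=> e_sphere Je_orth.
have dA := is_derive2_comp (is_derive2_hypot r_gt0) (hypot0 r_gt0) (is_derive2_r A_C2).
have dB := is_derive2_comp (is_derive2_hypot r_gt0) (hypot0 r_gt0) (is_derive2_r B_C2).
have dBJ := is_derive2_scale (is_derive2_hypot_cos r_gt0) (is_derive2_linear (qmul_is_linear J) dB).
have dBe := is_derive2_scale (is_derive2_hypot_sin r_gt0) (is_derive2_linear (qmul_is_linear e) dB).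
rewrite (derive2_along (is_derive2D (is_derive2D dA dBJ) dBe)).
  cbv beta delta [comp]; rewrite hypot0 //.
  move: (partial 1 (partial 1 A) _) (partial 1 A _) (partial 1 (partial 1 B) _).
  move: (partial 1 B _) (B _) => b1 b a11 a1 b11.
  by apply: quat_ext; rewrite /qmul !qcE; field; exact: lt0r_neq0.
have U_c0 : U (c + 0 *: e) by rewrite scale0r addr0.
move: (open_line U_open U_c0); apply: filterS => s U_s.
pose Js := (r / hypot r s) *: J + (s / hypot r s) *: e.
have c_s : c + s *: e = qax q0 (hypot r s) Js.
  rewrite /qax scalerDr !scalerA !mulrA ![hypot r s * _]mulrC.
  by rewrite !mulfK ?hypot_neq0 // addrA.
have Js_sphere : qsphere Js.
  apply: qsphere_comb => //.
  by rewrite !expr_div_n -mulrDl -(hypot_sqr r_gt0) divff // expf_neq0 // hypot_neq0.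
rewrite c_s in U_s *; rewrite ft_axial ?hypot_gt0 //.
by rewrite qmulDl !qmulZl addrA.
Qed.

Lemma laplacian_axial (eps : R) : eps ^+ 2 = 1 -> J = eps *: qe R 1 ->
  laplacian ft c =
    (partial 0 (partial 0 A) p + partial 1 (partial 1 A) p + (2 / r) *: partial 1 A p)
    + qmul J (partial 0 (partial 0 B) p + partial 1 (partial 1 B) p
              + (r ^+ 2)^-1 *: ((2 * r) *: partial 1 B p - 2 *: B p)).
Proof.
move=> eps2 J_def.
have e1_J : qe R 1 = eps *: J by rewrite J_def scalerA -expr2 eps2 scale1r.
have e2_sphere : qsphere (qe R 2) by split; rewrite qe_mkq2 !qcE //; ring.
have e3_sphere : qsphere (qe R 3) by split; rewrite qe_mkq3 !qcE //; ring.
have J_e2 : qc J 1 * qc (qe R 2) 1 + qc J 2 * qc (qe R 2) 2 + qc J 3 * qc (qe R 2) 3 = 0.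
  by rewrite J_def qe_mkq1 qe_mkq2 !qcE; ring.
have J_e3 : qc J 1 * qc (qe R 3) 1 + qc J 2 * qc (qe R 3) 2 + qc J 3 * qc (qe R 3) 3 = 0.
  by rewrite J_def qe_mkq1 qe_mkq3 !qcE; ring.
have D0 : partial 0 (partial 0 ft) c = _ := derive2_real_dir.
have D1 : partial 1 (partial 1 ft) c = _ := derive2_radial_dir e1_J.
have D2 : partial 2 (partial 2 ft) c = _ := derive2_orth_dir e2_sphere J_e2.
have D3 : partial 3 (partial 3 ft) c = _ := derive2_orth_dir e3_sphere J_e3.
rewrite /laplacian big_ord4 D0 D1 D2 D3 eps2 scale1r.
move: (partial 0 (partial 0 A) _) (partial 1 (partial 1 A) _) (partial 1 A _).
move: (partial 0 (partial 0 B) _) (partial 1 (partial 1 B) _) (partial 1 B _) (B _).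
move=> b b1 b11 b00 a1 a11 a00.
by apply: quat_ext; rewrite /qmul !qcE; field; exact: lt0r_neq0.
Qed.

End AxialSecondDerivatives.

Unset Implicit Arguments.

Theorem theorem3p4 (R : realType) (U : set 'rV[R]_4)
  (ft : 'rV[R]_4 -> 'rV[R]_4) (A B : 'rV[R]_2 -> 'rV[R]_4) :
  open U -> axially_symmetric U -> (forall u : R, ~ U (qreal u)) ->
  axially_harmonic U ft ->
  (forall (q0 r : R) (w : 'rV[R]_4), qsphere w -> 0 < r -> U (qax q0 r w) ->
     ft (qax q0 r w) = A (pt2 q0 r) + qmul w (B (pt2 q0 r))) ->
  Ck 2 (axial_domain U) A -> Ck 2 (axial_domain U) B ->
  forall p : 'rV[R]_2, axial_domain U p ->
    let r := p ord0 (inord 1) in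
    partial 0 (partial 0 A) p + partial 1 (partial 1 A) p
      + (2 / r) *: partial 1 A p = 0 /\
    partial 0 (partial 0 B) p + partial 1 (partial 1 B) p
      + (r ^+ 2)^-1 *: ((2 * r) *: partial 1 B p - 2 *: B p) = 0.
Proof.
move=> U_open U_sym _ [_ [_ [_ [_ ft_harmonic]]]] ft_axial A_C2 B_C2 p
  [r_gt0 [w [w_sphere U_w]]] r.
rewrite -/r in r_gt0 U_w.
have e1_sphere : qsphere (qe R 1) by split; rewrite qe_mkq1 !qcE //; ring.
have Ne1_sphere : qsphere (- qe R 1) by split; rewrite qe_mkq1 !qcE //; ring.
have sqrN1 : (-1 : R) ^+ 2 = 1 by rewrite sqrrN expr1n.
have U_J J : qsphere J -> U (qax (p 0 (inord 0)) r J) by move/(U_sym _ _ w J w_sphere); apply.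
have lap J eps (J_sphere : qsphere J) (eps2 : eps ^+ 2 = 1) (J_def : J = eps *: qe R 1) :=
  laplacian_axial U_open ft_axial A_C2 B_C2 J_sphere r_gt0 (U_J J J_sphere) eps2 J_def.
have p_eta : pt2 (p 0 (inord 0)) r = p by rewrite [RHS]pt2_eta.
move: (lap _ _ e1_sphere (expr1n _ _) (esym (scale1r _))).
move: (lap _ _ Ne1_sphere sqrN1 (esym (scaleN1r _))).
rewrite (ft_harmonic _ (U_J _ e1_sphere)) (ft_harmonic _ (U_J _ Ne1_sphere)).
rewrite p_eta qmulNl => /esym sub_eq /esym add_eq.
exact: qmul_sphere_eq0 e1_sphere add_eq sub_eq.
Qed.
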